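(* Let $\ell$ be a positive integer, let $A$ be the direct product of elementary abelian groups with $|A| = \ell$ (i.e. $A\cong \prod_{p\mid \ell} C_p^{d_p}$ where $p^{d_p}$ is the exact power of $p$ dividing $\ell$), and let $U \leq \mathrm{Aut}(A)$. Then the following are equivalent: (a) $U$ is $F$-relevant; (b) every extension $G$ of $A$ by $U$ satisfies $F(G) = A$; (c) there exists an extension $G$ of $A$ by $U$ with $F(G) = A$.
   Context: $F(G)$ denotes the Fitting subgroup of a finite group $G$. A subgroup $N \le \mathrm{Aut}(A)$ centralizes a series through $A$ if there is an $N$-invariant series of subgroups $A = A_1 > A_2 > \cdots > A_l > A_{l+1} = \{1\}$ such that $N$ induces the identity on every quotient $A_i/A_{i+1}$. A subgroup $U \le \mathrm{Aut}(A)$ is $F$-relevant if no non-trivial normal subgroup of $U$ centralizes a series through $A$. An extension of $A$ by $U$ is a group $G$ containing (a copy of) $A$ as a normal subgroup such that the conjugation action of $G$ on $A$ has kernel exactly $A$ and its image in $\mathrm{Aut}(A)$ is $U$ (so $G/A\cong U$ with the given action). *)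

From HB Require Import structures.
From mathcomp Require Import all_boot all_order all_fingroup all_solvable.
Set Implicit Arguments. Unset Strict Implicit. Unset Printing Implicit Defensive.
Import GroupScope.

(* A subgroup N of Aut(A) centralizes a series through A: there is a chain
   A = A_1 > A_2 > ... > A_{l+1} = 1 (written A :: s), each term N-invariant,
   each A_{i+1} normal in A_i, and N inducing the identity on A_i/A_{i+1},
   i.e. x^-1 * n x \in A_{i+1} for n in N, x in A_i. *)
Definition series_step (aT : finGroupType) (N : {set {perm aT}})
  (B C : {group aT}) : bool :=
  [&& C \proper B, C <| B,
      [forall n in N, [forall x in B, n x \in B]] &
      [forall n in N, [forall x in B, x^-1 * n x \in C]]].

Definition centralizes_series (aT : finGroupType) (N : {set {perm aT}})
  (A : {group aT}) : Prop :=
  exists s : seq {group aT},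
    path (series_step N) A s /\ last A s = 1%G.

Definition F_relevant (aT : finGroupType) (U : {group {perm aT}})
  (A : {group aT}) : Prop :=
  forall N : {group {perm aT}}, N <| U -> N != 1%G -> ~ centralizes_series N A.

(* G is an extension of A by U: K <| G is a copy of A (via the isomorphism f),
   the kernel of the conjugation action of G on K is exactly K, and the image
   of G in Aut(A) (transported along f) is exactly U. *)
Definition is_extension (aT gT : finGroupType) (A : {group aT})
  (U : {set {perm aT}}) (G K : {group gT}) (f : {morphism A >-> gT}) : Prop :=
  [/\ K <| G, isom A K f, 'C_G(K) = K,
      {in G, forall g, exists2 u, u \in U & {in A, forall x, f (u x) = f x ^ g}}
    & {in U, forall u : {perm aT}, exists2 g, g \in G & {in A, forall x, f (u x) = f x ^ g}}].

From HB Require Import structures.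
From mathcomp Require Import all_boot all_order all_fingroup all_solvable.
Set Implicit Arguments. Unset Strict Implicit. Unset Printing Implicit Defensive.
Import GroupScope.

(* For an extension G with copy K of A, conjugation gives a morphism
   ext_aut : G -> U onto U with kernel C_G(K) = K.
   (a) => (b): F = F(G) contains the abelian normal subgroup K, and the series
   K >= [K,F] >= [K,F,F] >= ... reaches 1 since F is nilpotent; its pull-back
   to A is centralized by ext_aut(F) <| U, so F-relevance forces
   ext_aut(F) = 1, i.e. F <= K.
   (b) => (c): the semidirect product A x| U is an extension.
   (c) => (a): the preimage M of a normal subgroup N of U centralizing a series
   through A stabilizes the transported series through K, and C_M(K) <= K;
   the stability theorem makes M nilpotent, so M <= F(G) = K and N = 1.
   The file proves the stability theorem, the translation between centralized
   series and index-chains, the properties of ext_aut, and then each arrow. *)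

Section Stability.

Variables (gT : finGroupType) (M K : {group gT}) (c : nat -> {group gT}).
Hypotheses (sKM : K \subset M) (c0 : c 0 = K).
Hypothesis cdec : forall k, c k.+1 \subset c k.
Hypothesis nMc : forall k, M \subset 'N(c k).
Hypothesis cMc : forall k, [~: c k, M] \subset c k.+1.

Lemma stable_chain_sub k : c k \subset K.
Proof.
elim: k => [|k IHk]; first by rewrite c0.
exact: subset_trans (cdec k) IHk.
Qed.

Lemma stable_chain_subM k : c k \subset M.
Proof. exact: subset_trans (stable_chain_sub k) sKM. Qed.

(* The j-th term of the lower central series of M pushes the chain down j+1
   steps; the induction step is the three subgroup lemma modulo c(i+j+2). *)
Lemma stable_chain_lcn j i : [~: c i, 'L_j.+1(M)] \subset c (i + j).+1.
Proof.
elim: j i => [|j IHj] i; first by rewrite addn0 lcn1.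
set X := c (i + j.+1).+1.
have nXM : M \subset 'N(X) := nMc _.
have nXL : 'L_j.+1(M) \subset 'N(X) := subset_trans (lcn_sub _ _) nXM.
have nXc : c i \subset 'N(X) := subset_trans (stable_chain_subM i) nXM.
have nX_ : forall H1 H2 : {group gT},
    H1 \subset M -> H2 \subset M -> [~: H1, H2] \subset 'N(X).
  by move=> H1 H2 sH1M sH2M; apply: subset_trans nXM; rewrite comm_subG.
have sLM := lcn_sub j.+1 M; have sciM := stable_chain_subM i.
rewrite lcnSn commGC -(quotient_cents2 (nX_ _ _ sLM (subxx M)) nXc).
rewrite quotientR //; apply/commG1P.
apply: (three_subgroup (G := (M / X)%G) (H := (c i / X)%G)).
  apply/commG1P; rewrite -quotientR // (quotient_cents2 (nX_ _ _ (subxx M) sciM) nXL).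
  apply: subset_trans (commgSS _ (subxx _)) _; first by rewrite commGC; apply: cMc.
  by rewrite /X -addSnnS; apply: IHj.
apply/commG1P; rewrite -quotientR // (quotient_cents2 (nX_ _ _ sciM sLM) nXM).
apply: subset_trans (commgSS (IHj i) (subxx M)) _.
by rewrite /X addnS; apply: cMc.
Qed.

Lemma stability_nilpotent l : 'C_M(K) \subset K -> c l = 1%G -> nilpotent M.
Proof.
move=> cMK cl.
have LK : 'L_l.+1(M) \subset K.
  apply: subset_trans cMK; rewrite subsetI lcn_sub /=.
  apply/commG1P/trivgP => /=; rewrite commGC -c0.
  by apply: subset_trans (stable_chain_lcn l 0) _; move: (cdec l); rewrite add0n cl.
have Lc : forall j, 'L_(l.+1 + j)(M) \subset c j.
  elim=> [|j IHj]; first by rewrite addn0 c0.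
  by rewrite addnS lcnSn; apply: subset_trans (cMc j); apply: commgSS.
apply/lcnP; exists (l + l); apply/trivgP.
by rewrite -addSn; move: (Lc l); rewrite cl.
Qed.

End Stability.

Section SeriesChains.

Variables (aT : finGroupType) (N : {set {perm aT}}).

Definition acts_trivially_on_chain (c : nat -> {group aT}) : Prop :=
  forall k, {in N, forall u : {perm aT}, {in c k, forall x,
    u x \in c k /\ x^-1 * u x \in c k.+1}}.

Lemma chain_centralizes_series n (c : nat -> {group aT}) :
  (forall k, c k.+1 \subset c k) -> (forall k, c k.+1 <| c k) ->
  acts_trivially_on_chain c -> c n = 1%G -> centralizes_series N (c 0).
Proof.
elim: n c => [|n IHn] c cdec cnorm cact cn; first by exists [::].
have [s [ps ls]] := IHn (fun k => c k.+1) (fun k => cdec k.+1)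
  (fun k => cnorm k.+1) (fun k => cact k.+1) cn.
have [c10 | c10] := eqVneq (c 1%N) (c 0); first by exists s; rewrite -c10.
exists (c 1%N :: s); split => //=; rewrite ps andbT.
rewrite /series_step properEneq cdec cnorm andbT /=.
apply/and3P; split; first by apply: contra_neq c10 => /val_inj.
  by apply/forall_inP => u Nu; apply/forall_inP => x cx; have [] := cact 0 u Nu x cx.
by apply/forall_inP => u Nu; apply/forall_inP => x cx; have [] := cact 0 u Nu x cx.
Qed.

Lemma centralizes_series_chain (A : {group aT}) :
  N \subset Aut A -> centralizes_series N A ->
  exists n (c : nat -> {group aT}),
    [/\ c 0 = A, c n = 1%G, forall k, c k.+1 \subset c k
      & acts_trivially_on_chain c].
Proof.
move=> sNAut [s [ps ls]]; pose c k := nth 1%G (A :: s) k.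
have c_end k : size s <= k -> c k = 1%G.
  rewrite leq_eqVlt => /predU1P[<- | lt_s_k]; first by rewrite /c -last_nth.
  by rewrite /c nth_default.
have fix1 u : u \in N -> u 1 = 1.
  by move=> Nu; rewrite -(autmE (subsetP sNAut u Nu)) morph1.
have step k : [&& c k.+1 \subset c k,
    [forall u in N, [forall x in c k, u x \in c k]] &
    [forall u in N, [forall x in c k, x^-1 * u x \in c k.+1]]].
  have [lt_k_s | le_s_k] := ltnP k (size s).
    by move/pathP: ps => /(_ 1%G k lt_k_s) /and4P[/proper_sub -> _ -> ->].
  rewrite !c_end ?(leq_trans le_s_k) // subxx /=.
  by apply/andP; split; apply/forall_inP => u Nu; apply/forall_inP => x /set1P ->;
    rewrite fix1 // ?mulg1 ?invg1 group1.
exists (size s), c; split => //; first exact: c_end.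
  by move=> k; case/and3P: (step k).
move=> k u Nu x cx; case/and3P: (step k) => _ /forall_inP act1 /forall_inP act2.
by split; [apply: (forall_inP (act1 u Nu)) | apply: (forall_inP (act2 u Nu))].
Qed.

End SeriesChains.

Section Extension.

Variables (aT gT : finGroupType) (A : {group aT}) (U : {group {perm aT}}).
Variables (G K : {group gT}) (f : {morphism A >-> gT}).
Hypothesis sUAut : U \subset Aut A.
Hypothesis extGK : is_extension U G K f.

Let nKG : K <| G. Proof. by case: extGK. Qed.
Let injf : 'injm f. Proof. by case: extGK => _ /isomP[]. Qed.
Let fA : f @* A = K. Proof. by case: extGK => _ /isomP[]. Qed.
Let cGK : 'C_G(K) = K. Proof. by case: extGK. Qed.

Definition ext_aut (g : gT) : {perm aT} :=
  odflt 1 [pick u in U | [forall x in A, f (u x) == f x ^ g]].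

Lemma ext_autP g :
  g \in G -> ext_aut g \in U /\ {in A, forall x, f (ext_aut g x) = f x ^ g}.
Proof.
move=> Gg; rewrite /ext_aut; case: pickP => [v /andP[Uv /forall_inP fv] | noU].
  by split=> // x Ax; apply/eqP/fv.
case: extGK => _ _ _ /(_ g Gg)[u Uu fu] _.
by have /negbT/negP[] := noU u; rewrite Uu; apply/forall_inP => x Ax; rewrite fu.
Qed.

Lemma ext_aut_uniq g u :
  g \in G -> u \in U -> {in A, forall x, f (u x) = f x ^ g} -> ext_aut g = u.
Proof.
move=> Gg Uu fu; have [Ug fg] := ext_autP Gg.
apply: (eq_Aut (subsetP sUAut _ Ug) (subsetP sUAut _ Uu)) => x Ax.
by apply: (injmP injf); rewrite ?Aut_closed ?(subsetP sUAut) // fg // fu.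
Qed.

Lemma ext_autM : {in G &, {morph ext_aut : g h / g * h}}.
Proof.
move=> g h Gg Gh /=; have [Ug fg] := ext_autP Gg; have [Uh fh] := ext_autP Gh.
apply: ext_aut_uniq; rewrite ?groupM // => x Ax.
by rewrite permM fh ?Aut_closed ?(subsetP sUAut) // fg // conjgM.
Qed.

Canonical ext_aut_morphism := Morphism ext_autM.

Lemma im_ext_aut : ext_aut @* G = U.
Proof.
apply/eqP; rewrite eqEsubset; apply/andP; split.
  by apply/subsetP => _ /morphimP[g Gg _ ->]; case: (ext_autP Gg).
apply/subsetP => u Uu; case: extGK => _ _ _ _ /(_ u Uu)[g Gg fg].
by rewrite -(ext_aut_uniq Gg Uu fg) mem_morphim.
Qed.

Lemma ker_ext_aut : 'ker ext_aut = K.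
Proof.
rewrite -cGK; apply/setP => g; apply/idP/idP.
  case/morphpreP => Gg /set1P ag1; rewrite inE Gg /= -fA.
  apply/centP => _ /morphimP[x Ax _ ->] /=.
  have [_ /(_ x Ax)] := ext_autP Gg; rewrite ag1 perm1 => fxg.
  by rewrite /commute [RHS]conjgC -fxg.
case/setIP => Gg cKg; apply/morphpreP; split => //; apply/set1P.
apply: ext_aut_uniq => // x Ax.
have Kfx : f x \in K by rewrite -fA mem_morphim.
by rewrite perm1 /conjg -(centP cKg _ Kfx) mulKg.
Qed.

Lemma ext_sub_Fitting : abelian A -> K \subset 'F(G).
Proof.
by move=> abA; apply: Fitting_max nKG _; apply: abelian_nil; rewrite -fA morphim_abelian.
Qed.

(* (a) => (b), main step: for A abelian, the pull-back along f of the series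
   K >= [K, F] >= [K, F, F] >= ... (F the Fitting subgroup of G) is a series
   through A centralized by the image of F in U. *)
Lemma Fitting_image_centralizes_series :
  abelian A -> centralizes_series (ext_aut @* 'F(G)) A.
Proof.
move=> abA; set F := 'F(G).
have nFK : F \subset 'N(K) := subset_trans (Fitting_sub G) (normal_norm nKG).
have sKF : K \subset F := ext_sub_Fitting abA.
pose d := fix d k : {group gT} := if k is k'.+1 then [~: d k', F]%G else K.
have nFd k : F \subset 'N(d k).
  by case: k => [|k] //=; apply: commg_normr.
have dL k : d k \subset 'L_k.+1(F).
  by elim: k => [|k IHk]; [rewrite lcn1 | rewrite lcnSn /= commgSS].
have [n Ln] := lcnP _ (Fitting_nil G).
pose c k := (f @*^-1 d k)%G.
have c0 : c 0 = A by apply: val_inj; rewrite /= -fA injmK.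
rewrite -c0; apply: (chain_centralizes_series (n := n)).
- by move=> k; apply: morphpreS; rewrite /= commg_subl.
- move=> k; rewrite -sub_abelian_normal ?morphpreS /= ?commg_subl //.
  exact: abelianS (morphpre_sub _ _) abA.
- move=> k _ /morphimP[g Gg Fg ->] x /morphpreP[Ax fxd].
  have [Ug fg] := ext_autP Gg.
  have Agx : ext_aut g x \in A by rewrite Aut_closed ?(subsetP sUAut).
  split; apply: mem_morphpre; rewrite ?groupM ?groupV //.
    by rewrite fg // memJ_norm // (subsetP (nFd k)).
  by rewrite morphM ?groupV // morphV // fg //= mem_commg.
- apply: val_inj => /=.
  have dn : d n = 1 :> {set gT} by apply/trivgP; rewrite -Ln dL.
  by rewrite dn -/('ker f) ker_injm.
Qed.

(* (a) => (b): if U is F-relevant, the image of F(G) in U is trivial, so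
   F(G) lies in the kernel K of the action. *)
Lemma Fitting_ext_of_F_relevant : abelian A -> F_relevant U A -> 'F(G) = K.
Proof.
move=> abA FrelU; apply/eqP; rewrite eqEsubset ext_sub_Fitting // andbT.
have nFU : ext_aut @* 'F(G) <| U by rewrite -im_ext_aut morphim_normal ?Fitting_normal.
have [F1 | Fn1] := eqVneq (ext_aut @* 'F(G))%G 1%G.
  have F1' : ext_aut @* 'F(G) = 1 by move/(congr1 val): F1.
  by rewrite -ker_ext_aut -sub_morphim_pre ?Fitting_sub // F1'.
by case: (FrelU _ nFU Fn1); apply: Fitting_image_centralizes_series.
Qed.

(* (c) => (a), main step: the preimage in G of a subgroup N of U that
   centralizes a series through A stabilizes the transported series through
   the self-centralizing normal subgroup K, hence is nilpotent. *)
Lemma preimage_nilpotent (N : {group {perm aT}}) :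
  N \subset U -> centralizes_series N A -> nilpotent (ext_aut @*^-1 N).
Proof.
move=> sNU /(centralizes_series_chain (subset_trans sNU sUAut)).
case=> n [c [c0 cn cdec cact]].
set M := ext_aut @*^-1 N.
have cMc k : [~: f @* c k, M] \subset f @* c k.+1.
  rewrite gen_subG; apply/subsetP => _ /imset2P[_ m /morphimP[x Ax cx ->] Mm ->].
  case/morphpreP: Mm => Gm Nm; have [Um fm] := ext_autP Gm.
  have [cux cxu] := cact k _ Nm x cx.
  have Aux : ext_aut m x \in A by rewrite Aut_closed ?(subsetP sUAut).
  rewrite /commg -fm // -morphV // -morphM ?groupV //.
  by rewrite mem_morphim // groupM ?groupV.
have sMK : K \subset M by rewrite /M -ker_ext_aut ker_sub_pre.
have cMK : 'C_M(K) \subset K by rewrite -{2}cGK setSI // morphpre_sub.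
pose C k := (f @* c k)%G.
apply: (@stability_nilpotent _ _ K C sMK _ _ _ cMc n cMK).
- by apply: val_inj; rewrite /= c0 fA.
- by move=> k; apply: morphimS.
- by move=> k; rewrite -commg_subl (subset_trans (cMc k)) ?morphimS.
- by apply: val_inj; rewrite /= cn morphim1.
Qed.

(* (c) => (a): a normal subgroup N of U centralizing a series has nilpotent
   normal preimage in G, hence contained in F(G) = K = ker ext_aut; so N = 1. *)
Lemma F_relevant_of_Fitting_ext : 'F(G) = K -> F_relevant U A.
Proof.
move=> FGK N nNU Nn1 cN; have sNU := normal_sub nNU.
have preU : ext_aut @*^-1 U = G.
  by rewrite -im_ext_aut morphimGK // ker_ext_aut normal_sub.
have nMG : ext_aut @*^-1 N <| G.
  by rewrite -{2}preU morphpre_normal ?im_ext_aut.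
have sMK : ext_aut @*^-1 N \subset K.
  by rewrite -FGK Fitting_max ?preimage_nilpotent.
move/eqP: Nn1; apply; apply/val_inj/trivgP => /=.
rewrite -(morphpreK (f := ext_aut_morphism) (R := N)) ?im_ext_aut //.
by rewrite -(morphim_ker ext_aut_morphism) ker_ext_aut morphimS.
Qed.

End Extension.

(* (b) => (c): for A abelian the semidirect product A x| U, with U acting
   naturally on A, is an extension of A by U. *)
Lemma sdprod_extension (aT : finGroupType) (A : {group aT})
    (U : {group {perm aT}}) :
  U \subset Aut A -> abelian A ->
  exists (gT : finGroupType) (G K : {group gT}) (f : {morphism A >-> gT}),
    is_extension U G K f.
Proof.
move=> sUAut abA; pose to := ract_groupAction (aut_groupAction A) sUAut.
pose s1 := sdpair1_morphism to; pose K := (s1 @* A)%G.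
have injs1 : 'injm s1 := injm_sdpair1 to.
have [nKT _ _ _ _] := sdprod_context (sdprod_sdpair to).
have abK : abelian K by rewrite morphim_abelian.
have conj_s1 x g : x \in A -> s1 x ^ g = s1 (g.1 x).
  move=> Ax; have := valP g; rewrite inE => /andP[Ug1 Ag2].
  have Kg2 : s1 g.2 \in K by rewrite mem_morphim.
  have Kx : s1 (to x g.1) \in K by rewrite mem_morphim ?gact_stable.
  rewrite {1}[g]sdpairE conjgM -sdpair_act //.
  by rewrite /conjg (centsP abK _ Kx _ Kg2) mulKg.
exists (sdprod_groupType to), [set: sdprod_groupType to]%G, K, s1; split.
- exact: nKT.
- by apply/isomP.
- apply/eqP; rewrite eqEsubset subsetI subsetT andbC /=.
  apply/andP; split; first exact: abK.
  apply/subsetP => g /setIP[_ cKg]; have := valP g; rewrite inE => /andP[Ug1 Ag2].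
  have g1 : g.1 = 1.
    apply: (eq_Aut (subsetP sUAut _ Ug1) (group1 _)) => x Ax.
    have Kx : s1 x \in K by rewrite mem_morphim.
    apply: (injmP injs1); rewrite ?perm1 ?Aut_closed ?(subsetP sUAut) //.
    by rewrite -conj_s1 // /conjg -(centP cKg _ Kx) mulKg.
  by rewrite [g]sdpairE g1 morph1 mul1g mem_morphim.
- by move=> g _; exists g.1 => [|x Ax]; [move: (valP g); rewrite inE => /andP[] | rewrite conj_s1].
- move=> u Uu; exists (sdpair2 to u); first by rewrite inE.
  by move=> x Ax; rewrite -sdpair_act.
Qed.

Theorem lemma3p2 (l : nat) (aT : finGroupType) (A : {group aT})
  (U : {group {perm aT}}) :
  0 < l -> #|A| = l -> abelian A ->
  (forall p, prime p -> p.-abelem 'O_p(A)) ->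
  U \subset Aut A ->
  [<-> F_relevant U A;
       forall (gT : finGroupType) (G K : {group gT}) (f : {morphism A >-> gT}),
         is_extension U G K f -> 'F(G) = K;
       exists (gT : finGroupType) (G K : {group gT}) (f : {morphism A >-> gT}),
         is_extension U G K f /\ 'F(G) = K].
Proof.
move=> _ _ abA _ sUAut; tfae.
- by move=> FrelU gT G K f extGK; exact: Fitting_ext_of_F_relevant sUAut extGK abA FrelU.
- move=> FitK; have [gT [G [K [f extGK]]]] := sdprod_extension sUAut abA.
  by exists gT, G, K, f; split; last exact: FitK _ _ _ _ extGK.
- by case=> gT [G [K [f [extGK FGK]]]]; exact: F_relevant_of_Fitting_ext sUAut extGK FGK.
Qed.
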